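(* Let $d\ge1$, $n\ge3$ and $\lambda\in\mathcal{P}(d,n)$. Then $\lambda\in\mathcal{R}(d,n)$ if and only if the trivial representation of the subgroup $\langle s_1,s_2\rangle\cong\mathfrak{S}_3$ of $G(d,1,n)$ is not a direct summand of $\mathrm{Res}^{G(d,1,n)}_{\langle s_1,s_2\rangle}(E^\lambda)$.
   Context: Let $d,n\ge1$ be integers and $u$ an indeterminate. The Yokonuma–Hecke algebra $\mathrm{Y}_{d,n}(u)$ is the associative $\mathbb{C}[u,u^{-1}]$-algebra generated by $g_1,\dots,g_{n-1},t_1,\dots,t_n$ subject to: $g_ig_j=g_jg_i$ for $|i-j|>1$; $g_ig_{i+1}g_i=g_{i+1}g_ig_{i+1}$ for $1\le i\le n-2$; $t_it_j=t_jt_i$ for all $i,j$; $t_jg_i=g_it_{s_i(j)}$ for all $i,j$, where $s_i$ is the transposition $(i,i+1)$; $t_j^d=1$ for all $j$; and $g_i^2=1+(u-1)e_i+(u-1)e_ig_i$, where $e_i=\frac1d\sum_{s=0}^{d-1}t_i^st_{i+1}^{-s}$. For $n\ge3$, the Yokonuma–Temperley–Lieb algebra $\mathrm{YTL}_{d,n}(u)$ is the quotient of $\mathrm{Y}_{d,n}(u)$ by the two-sided ideal generated by the elements $g_ig_{i+1}g_i+g_ig_{i+1}+g_{i+1}g_i+g_i+g_{i+1}+1$, $1\le i\le n-2$. For a $\mathbb{C}[u,u^{-1}]$-algebra $B$, write $\mathbb{C}(u)B=\mathbb{C}(u)\otimes_{\mathbb{C}[u,u^{-1}]}B$. A $d$-partition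 of $n$ is a $d$-tuple $\lambda=(\lambda^{(0)},\dots,\lambda^{(d-1)})$ of partitions whose sizes sum to $n$; $\mathcal{P}(d,n)$ denotes the set of them. Let $G(d,1,n)=(\mathbb{Z}/d\mathbb{Z})^n\rtimes\mathfrak{S}_n$, with $s_i\in\mathfrak S_n\subset G(d,1,n)$ the transposition $(i,i+1)$. Its irreducible complex representations $E^\lambda$, $\lambda\in\mathcal P(d,n)$, are labelled in the standard (Specht) way: with $k_i=|\lambda^{(i)}|$, $E^\lambda$ is induced from $\prod_{i=0}^{d-1}G(d,1,k_i)$ of the outer tensor product whose $i$-th factor is the representation on which each coordinate of $(\mathbb Z/d\mathbb Z)^{k_i}$ acts by the character sending a generator to $\xi^i$ ($\xi$ a fixed primitive $d$-th root of unity) and $\mathfrak{S}_{k_i}$ acts through the Specht module of $\lambda^{(i)}$. The algebra $\mathbb{C}(u)\mathrm{Y}_{d,n}(u)$ is split semisimple with irreducible representations $\rho^\lambda$, $\lambda\in\mathcal P(d,n)$, where $\rho^\lambda$ specializes at $u=1$ to $E^\lambda$. Let $\mathcal{R}(d,n)$ be the set of $\lambda\in\mathcal P(d,n)$ such that $\rho^\lambda(g_1g_2g_1+g_1g_2+g_2g_1+g_1+g_2+1)=0$; equivalently the $\rho^\lambda$ with $\lambda\in\mathcal R(d,n)$ are exactly the irreducible representations of $\mathbb{C}(u)\mathrm{YTL}_{d,n}(u)$. *)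

From HB Require Import structures.
From mathcomp Require Import all_boot all_order all_algebra all_field.
Set Implicit Arguments. Unset Strict Implicit. Unset Printing Implicit Defensive.
Import Order.TTheory GRing.Theory Num.Theory.
Local Open Scope ring_scope.

(* The field C(u) of rational functions over the complex (algebraic) numbers,
   with u the indeterminate. *)
Definition Ku := {fraction {poly algC}}.
Definition polyK (p : {poly algC}) : Ku := tofrac p.
Definition uK : Ku := polyK 'X.

Definition swapi (i j : nat) : nat :=
  if j == i then i.+1 else if j == i.+1 then i else j.

Definition e_mx (F : fieldType) (N d : nat) (T : nat -> 'M[F]_N) (i : nat)
  : 'M[F]_N :=
  (d%:R)^-1 *: \sum_(s < d) (T i ^+ s *m (invmx (T i.+1)) ^+ s).

(* (G i)_{1<=i<=n-1}, (T j)_{1<=j<=n} are the images of g_i, t_j under a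
   representation of Y_{d,n}(u) (with u acting as the scalar u). *)
Definition YH_rep (F : fieldType) (N d n : nat) (u : F)
  (G T : nat -> 'M[F]_N) : Prop :=
  (forall i j, (1 <= i <= n.-1)%N -> (1 <= j <= n.-1)%N ->
     ((i.+1 < j) || (j.+1 < i))%N -> G i *m G j = G j *m G i) /\
  (forall i, (1 <= i)%N -> (i <= n - 2)%N ->
     G i *m G i.+1 *m G i = G i.+1 *m G i *m G i.+1) /\
  (forall i j, (1 <= i <= n)%N -> (1 <= j <= n)%N -> T i *m T j = T j *m T i) /\
  (forall i j, (1 <= i <= n.-1)%N -> (1 <= j <= n)%N ->
     T j *m G i = G i *m T (swapi i j)) /\
  (forall j, (1 <= j <= n)%N -> T j ^+ d = 1%:M) /\
  (forall i, (1 <= i <= n.-1)%N ->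
     G i *m G i = 1%:M + (u - 1) *: e_mx d T i
                      + (u - 1) *: (e_mx d T i *m G i)).

Definition YH_irreducible (F : fieldType) (N n : nat) (G T : nat -> 'M[F]_N)
  : Prop :=
  (0 < N)%N /\
  forall U : 'M[F]_N,
    (forall i, (1 <= i <= n.-1)%N -> stablemx U (G i)) ->
    (forall j, (1 <= j <= n)%N -> stablemx U (T j)) ->
    (U == (0 : 'M[F]_N))%MS || row_full U.

Definition YTL_elt (F : fieldType) (N : nat) (G : nat -> 'M[F]_N) : 'M[F]_N :=
  G 1%N *m G 2%N *m G 1%N + G 1%N *m G 2%N + G 2%N *m G 1%N
  + G 1%N + G 2%N + 1%:M.

(* The trivial representation of the group generated by (the actions A, B of)
   s1, s2 is a direct summand of the module F^N: there is a line <v> on which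
   both act trivially and an invariant complement W with F^N = <v> (+) W. *)
Definition trivial_summand (F : fieldType) (N : nat) (A B : 'M[F]_N) : Prop :=
  exists (v : 'rV[F]_N) (W : 'M[F]_N),
    [/\ v != 0, v *m A = v & v *m B = v] /\
    [/\ stablemx W A, stablemx W B, (v :&: W)%MS == 0 & row_full (v + W)%MS].

(* Representation over C(u) given in "integral form": matrices over C[u]
   divided by a common denominator D with D(1) <> 0, i.e. with entries in the
   local ring C[u]_(u-1); and its specialization at u = 1. *)
Definition lift_rep (N : nat) (D : {poly algC}) (M : nat -> 'M[{poly algC}]_N)
  : nat -> 'M[Ku]_N :=
  fun i => (polyK D)^-1 *: map_mx polyK (M i).
Definition spec_rep (N : nat) (D : {poly algC}) (M : nat -> 'M[{poly algC}]_N)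
  : nat -> 'M[algC]_N :=
  fun i => (D.[1])^-1 *: map_mx (fun p => p.[1]) (M i).

From HB Require Import structures.
From mathcomp Require Import all_boot all_order all_algebra all_field.
Set Implicit Arguments. Unset Strict Implicit. Unset Printing Implicit Defensive.
Import GRing.Theory Num.Theory.
Local Open Scope ring_scope.

(* Write Z for the image of g1 g2 g1 + g1 g2 + g2 g1 + g1 + g2 + 1, a matrix with
   entries in the local ring C[u]_(u-1), and z for its value at u = 1. There the
   g_i become the transpositions s_i and z is the sum of the six elements of
   <s1, s2>, i.e. 6 times the projection onto the trivial isotypic component;
   so the trivial representation is a summand iff z <> 0, and it remains to see
   that Z = 0 iff z = 0.
   By the quadratic relation g_i Z = (1 + (u-1) e_i) Z; pushing the e_i through
   the g_i gives Z^2 = 6 Z + (u-1) K Z with K regular at u = 1. If Z <> 0, write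
   Z = (u-1)^j Z0 with Z0(1) <> 0; cancelling (u-1)^j leaves
   (u-1)^j Z0^2 = 6 Z0 + (u-1) K Z0, and evaluating at u = 1 forces j = 0,
   i.e. z = Z0(1) <> 0. *)

Section YTLIdentities.
Variable R : pzRingType.
Implicit Types g h u : R.

Definition ytl g h := g * h * g + g * h + h * g + g + h + 1.

Lemma ytl_factorl g h : ytl g h = (1 + g) * (1 + h + h * g).
Proof.
rewrite /ytl !mulrDl !mulrDr !mul1r !mulr1 ?mulrA !addrA.
by rewrite [RHS](ACl (6*5*3*4*2*1)).
Qed.

Lemma ytl_factorr g h : ytl g h = (1 + h + g * h) * (1 + g).
Proof.
rewrite /ytl !mulrDl !mulrDr !mul1r !mulr1 ?mulrA !addrA.
by rewrite [RHS](ACl (6*5*4*2*3*1)).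
Qed.

Lemma ytl_braidC g h : g * h * g = h * g * h -> ytl g h = ytl h g.
Proof. by move=> gh; rewrite /ytl gh [RHS](ACl (1*3*2*5*4*6)). Qed.

Lemma ytl_mull g h u : g * (1 + g) = u * (1 + g) -> g * ytl g h = u * ytl g h.
Proof. by move=> gu; rewrite ytl_factorl !mulrA gu. Qed.

Lemma ytl_mulr1 g h : (1 + g) * g = 1 + g -> ytl g h * g = ytl g h.
Proof. by move=> g1; rewrite ytl_factorr -mulrA g1. Qed.

Lemma ytl_involution g h : g * g = 1 -> h * h = 1 -> g * h * g = h * g * h ->
  [/\ g * ytl g h = ytl g h, h * ytl g h = ytl g h,
      ytl g h * g = ytl g h, ytl g h * h = ytl g h
    & ytl g h * ytl g h = ytl g h *+ 6].
Proof.
move=> gg hh ghg.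
have invol (k : R) : k * k = 1 -> k * (1 + k) = 1 * (1 + k) /\ (1 + k) * k = 1 + k.
  by move=> kk; rewrite mul1r mulrDr mulrDl kk mulr1 mul1r addrC.
have [gl gr] := invol g gg; have [hl hr] := invol h hh.
have ZhgE : ytl h g = ytl g h by rewrite ytl_braidC.
have gZ : g * ytl g h = ytl g h by rewrite (ytl_mull h gl) mul1r.
have hZ : h * ytl g h = ytl g h by rewrite -ZhgE (ytl_mull g hl) mul1r.
split=> //; [exact: ytl_mulr1 gr | by rewrite -ZhgE (ytl_mulr1 g hr) |].
rewrite {1}/ytl !mulrDl mul1r -!mulrA hZ !gZ hZ gZ.
by rewrite !mulrS mulr0n addr0 !addrA.
Qed.

Section QuadraticRelation.
Variables (S : R -> Prop) (c : R).
Hypotheses (SD : forall a b, S a -> S b -> S (a + b))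
           (SM : forall a b, S a -> S b -> S (a * b)) (Sc : S c).

Definition congr_c n u := exists2 k, S k & u = n%:R + c * k.

Lemma congr_cD m n u v : congr_c m u -> congr_c n v -> congr_c (m + n) (u + v).
Proof.
move=> [a Sa ->] [b Sb ->]; exists (a + b); first exact: SD.
by rewrite natrD mulrDr addrACA.
Qed.

Lemma congr_c1M u v : congr_c 1 u -> congr_c 1 v -> congr_c 1 (u * v).
Proof.
move=> [a Sa ->] [b Sb ->]; exists (a + b + a * c * b); first by auto.
by rewrite mulrDl mul1r !mulrDr mulr1 -!mulrA !addrA (ACl (1*3*2*4)).
Qed.

Lemma conj_unipotent g k k' : g * c = c * g -> g * k = k' * g ->
  g * (1 + c * k) = (1 + c * k') * g.
Proof. by move=> gc gk; rewrite mulrDr mulrDl mulr1 mul1r mulrA gc -!mulrA gk. Qed.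

Variables g1 g2 e1 e2 e13 : R.
Hypotheses (Se1 : S e1) (Se2 : S e2) (Se13 : S e13).
Hypotheses (g1c : g1 * c = c * g1) (g2c : g2 * c = c * g2).
Hypotheses (quad1 : g1 * g1 = 1 + c * e1 + c * (e1 * g1))
           (quad2 : g2 * g2 = 1 + c * e2 + c * (e2 * g2)).
Hypothesis braid : g1 * g2 * g1 = g2 * g1 * g2.
Hypotheses (g2e1 : g2 * e1 = e13 * g2) (g1e2 : g1 * e2 = e13 * g1)
           (g1e13 : g1 * e13 = e2 * g1).

Lemma ytl_sqr_congr :
  exists2 k, S k & ytl g1 g2 * ytl g1 g2 = ytl g1 g2 *+ 6 + c * k * ytl g1 g2.
Proof.
set Z := ytl g1 g2.
have quadl g e : g * g = 1 + c * e + c * (e * g) ->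
    g * (1 + g) = (1 + c * e) * (1 + g).
  by move=> gg; rewrite mulrDr mulr1 gg mulrDl mul1r mulrDr mulr1 mulrA !addrA (addrC g).
have E1 : g1 * Z = (1 + c * e1) * Z := ytl_mull g2 (quadl _ _ quad1).
have E2 : g2 * Z = (1 + c * e2) * Z.
  by rewrite /Z ytl_braidC //; exact: ytl_mull (quadl _ _ quad2).
have E12 : g1 * g2 * Z = (1 + c * e13) * (1 + c * e1) * Z.
  by rewrite -mulrA E2 mulrA (conj_unipotent g1c g1e2) -mulrA E1 mulrA.
have E21 : g2 * g1 * Z = (1 + c * e13) * (1 + c * e2) * Z.
  by rewrite -mulrA E1 mulrA (conj_unipotent g2c g2e1) -mulrA E2 mulrA.
have E121 : g1 * g2 * g1 * Z = (1 + c * e2) * ((1 + c * e13) * (1 + c * e1)) * Z.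
  rewrite -!mulrA (mulrA g2) E21 -!mulrA (mulrA g1) (conj_unipotent g1c g1e13).
  by rewrite -mulrA (mulrA g1) (conj_unipotent g1c g1e2) -mulrA E1 !mulrA.
have U e : S e -> congr_c 1 (1 + c * e) by exists e.
have [k Sk Ek] : congr_c (1 + 1 + 1 + 1 + 1)
    ((1 + c * e2) * ((1 + c * e13) * (1 + c * e1))
     + (1 + c * e13) * (1 + c * e1) + (1 + c * e13) * (1 + c * e2)
     + (1 + c * e1) + (1 + c * e2)).
  by do ?[apply: congr_cD]; do ?[apply: congr_c1M]; exact: U.
exists k => //; rewrite {1}/Z /ytl !mulrDl mul1r E121 E12 E21 E1 E2 -!mulrDl Ek.
by rewrite mulrDl mulr_natl addrAC -mulrSr.
Qed.

End QuadraticRelation.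
End YTLIdentities.

Lemma scalerV_eq (K : fieldType) (V : lmodType K) (a b : K) (u v : V) :
  a != 0 -> b != 0 -> (a^-1 *: u == b^-1 *: v) = (b *: u == a *: v).
Proof.
move=> a0 b0; rewrite -(inj_eq (scalerI (mulf_neq0 a0 b0))) !scalerA.
by rewrite mulrAC divff // mul1r -mulrA divff // mulr1.
Qed.

Lemma scalerV_addE (K : fieldType) (V : lmodType K) (a b : K) (u v : V) :
  a != 0 -> b != 0 -> a^-1 *: u + b^-1 *: v = (a * b)^-1 *: (b *: u + a *: v).
Proof.
move=> a0 b0; rewrite scalerDr !scalerA invfM.
by rewrite -mulrA mulVf // mulr1 mulrAC mulVf // mul1r.
Qed.

Section Specialization.
Variables (F : fieldType) (x : F) (N : nat).
Local Notation frac := (@tofrac {poly F}).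
Local Notation ev := (horner_eval x).
Implicit Types (p q : {poly F}) (P Q : 'M[{poly F}]_N).
Implicit Types (A B : 'M[{fraction {poly F}}]_N) (a b : 'M[F]_N).

(* A has entries in the local ring F[u]_(u - x) and a is its value at u = x. *)
Definition specializes A a := exists q Q,
  [/\ q.[x] != 0, A = (frac q)^-1 *: map_mx frac Q & a = q.[x]^-1 *: map_mx ev Q].

Definition specializable A := exists a, specializes A a.

Lemma map_mx_tofrac_inj : injective (map_mx frac : 'M_N -> 'M_N).
Proof.
move=> P Q /matrixP ePQ; apply/matrixP => i j.
by apply/eqP; rewrite -tofrac_eq; have := ePQ i j; rewrite !mxE => ->.
Qed.

Let map_evZ p P : map_mx ev (p *: P) = p.[x] *: map_mx ev P.
Proof. exact: map_mxZ. Qed.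

Lemma tofrac_neq0 q : q.[x] != 0 -> frac q != 0.
Proof. by apply: contraNneq => /eqP; rewrite tofrac_eq0 => /eqP ->; rewrite horner0. Qed.

Lemma specializes_uniq A a b : specializes A a -> specializes A b -> a = b.
Proof.
move=> [q [Q [qx -> ->]]] [r [R [rx /eqP EA ->]]]; apply/eqP.
rewrite scalerV_eq ?tofrac_neq0 // -!map_mxZ (inj_eq map_mx_tofrac_inj) in EA.
by rewrite scalerV_eq // -!map_evZ (eqP EA).
Qed.

Lemma specializesD A B a b :
  specializes A a -> specializes B b -> specializes (A + B) (a + b).
Proof.
move=> [q [Q [qx -> ->]]] [r [R [rx -> ->]]].
exists (q * r), (r *: Q + q *: R); split; first by rewrite hornerM mulf_neq0.
  by rewrite scalerV_addE ?tofrac_neq0 // map_mxD !map_mxZ rmorphM.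
by rewrite scalerV_addE // map_mxD !map_evZ hornerM.
Qed.

Lemma specializesM A B a b :
  specializes A a -> specializes B b -> specializes (A *m B) (a *m b).
Proof.
move=> [q [Q [qx -> ->]]] [r [R [rx -> ->]]].
exists (q * r), (Q *m R); split; first by rewrite hornerM mulf_neq0.
  by rewrite -scalemxAl -scalemxAr scalerA map_mxM rmorphM invfM mulrC.
by rewrite -scalemxAl -scalemxAr scalerA map_mxM hornerM invfM mulrC.
Qed.

Lemma specializesZ p A a : specializes A a -> specializes (frac p *: A) (p.[x] *: a).
Proof.
move=> [q [Q [qx -> ->]]]; exists q, (p *: Q).
by rewrite map_mxZ map_evZ !scalerA [_ * frac p]mulrC [_ * p.[x]]mulrC.
Qed.

Lemma specializesZV p A a : p.[x] != 0 ->
  specializes A a -> specializes ((frac p)^-1 *: A) (p.[x]^-1 *: a).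
Proof.
move=> px [q [Q [qx -> ->]]]; exists (p * q), Q.
by rewrite hornerM mulf_neq0 // rmorphM !invfM !scalerA.
Qed.

Lemma specializes1 : specializes 1%:M 1%:M.
Proof.
by exists 1, 1%:M; rewrite hornerC oner_neq0 rmorph1 !invr1 !scale1r !map_mx1.
Qed.

Lemma specializes0 : specializes 0 0.
Proof. by exists 1, 0; rewrite hornerC oner_neq0 !map_mx0 !scaler0. Qed.

Lemma specializesX A a k : specializes A a -> specializes (A ^+ k) (a ^+ k).
Proof.
move=> Aa; elim: k => [|k IHk]; first exact: specializes1.
by rewrite !exprS -!mulmxE; apply: specializesM.
Qed.

Lemma specializes_sum (I : finType) (Af : I -> 'M_N) (af : I -> 'M_N) :
  (forall i, specializes (Af i) (af i)) ->
  specializes (\sum_i Af i) (\sum_i af i).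
Proof.
move=> Aa; apply: (big_ind2 specializes specializes0) => // *.
exact: specializesD.
Qed.

Lemma poly_mx_factor_XsubC Q : Q != 0 ->
  exists j Q0, Q = ('X - x%:P) ^+ j *: Q0 /\ map_mx ev Q0 != 0.
Proof.
have [n] := ubnP (\sum_(ij : 'I_N * 'I_N) size (Q ij.1 ij.2)).
elim: n Q => // n IHn Q lt_Q_n nzQ.
have [Qx0|] := eqVneq (map_mx ev Q) 0; last by exists 0%N, Q; rewrite scale1r.
have Xx0 : 'X - x%:P != 0 by rewrite polyXsubC_eq0.
pose Q' := map_mx (fun p => p %/ ('X - x%:P)) Q.
have defQ : Q = ('X - x%:P) *: Q'.
  apply/matrixP => i j; rewrite !mxE divpKC // dvdp_XsubCl.
  by apply/rootP; have /matrixP/(_ i j) := Qx0; rewrite !mxE.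
have nzQ' : Q' != 0 by apply: contraNneq nzQ => Q'0; rewrite defQ Q'0 scaler0.
have [[i j] /= nzQij] : exists ij : 'I_N * 'I_N, Q ij.1 ij.2 != 0.
  by have /matrix0Pn[i [j nzQij]] := nzQ; exists (i, j).
have sizeQ' k l : size (Q' k l) = (size (Q k l)).-1.
  by rewrite mxE size_divp // size_XsubC subn1.
have [|k [Q0 [defQ' nzQ0]]] := IHn Q' _ nzQ'.
  rewrite -ltnS (leq_trans _ lt_Q_n) // ltnS.
  rewrite (bigD1 (i, j)) //= [ltnRHS](bigD1 (i, j)) //=.
  rewrite sizeQ' -addSn leq_add ?prednK ?size_poly_gt0 //.
  by apply: leq_sum => kl _; rewrite sizeQ' leq_pred.
by exists k.+1, Q0; rewrite defQ defQ' scalerA -exprS.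
Qed.

Lemma specializesMn A a k : specializes A a -> specializes (A *+ k) (a *+ k).
Proof.
move=> Aa; elim: k => [|k IHk]; first exact: specializes0.
by rewrite !mulrS; apply: specializesD.
Qed.

Lemma specializes_factor A a : specializes A a -> A != 0 ->
  exists j A0 a0,
    [/\ A = frac (('X - x%:P) ^+ j) *: A0, specializes A0 a0 & a0 != 0].
Proof.
move=> [q [Q [qx defA _]]] nzA.
have nzQ : Q != 0 by apply: contraNneq nzA => Q0; rewrite defA Q0 map_mx0 scaler0.
have [j [Q0 [defQ nzQ0]]] := poly_mx_factor_XsubC nzQ.
exists j, ((frac q)^-1 *: map_mx frac Q0), (q.[x]^-1 *: map_mx ev Q0); split.
- by rewrite defA defQ map_mxZ !scalerA mulrC.
- by exists q, Q0.
- by rewrite scaler_eq0 invr_eq0 negb_or qx.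
Qed.

Lemma specializes_neq0 k A C a : (k%:R : F) != 0 -> specializable C ->
    A * A = A *+ k + (frac ('X - x%:P))%:M * C * A ->
  specializes A a -> A != 0 -> a != 0.
Proof.
move=> k0 [c Cc] sqA Aa nzA.
have [j [A0 [a0 [defA A0a0 nz_a0]]]] := specializes_factor Aa nzA.
set p := ('X - x%:P) ^+ j in defA.
have p0 : frac p != 0 by rewrite rmorphXn expf_neq0 // tofrac_eq0 polyXsubC_eq0.
have sqA0 : frac p *: (A0 *m A0) = A0 *+ k + frac ('X - x%:P) *: (C *m A0).
  apply: (scalerI p0); move: sqA; rewrite defA -!mulmxE mul_scalar_mx.
  rewrite -!scalemxAl -!scalemxAr !scalerA => ->.
  by rewrite scalerDr scalerMnr scalerA mulrC.
have sq_a0 : p.[x] *: (a0 *m a0) = a0 *+ k.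
  have := specializesD (specializesMn k A0a0)
    (specializesZ ('X - x%:P) (specializesM Cc A0a0)).
  rewrite -sqA0 hornerXsubC subrr scale0r addr0; apply: specializes_uniq.
  exact: specializesZ (specializesM A0a0 A0a0).
have -> : a = p.[x] *: a0.
  by apply: specializes_uniq Aa _; rewrite defA; exact: specializesZ.
rewrite scaler_eq0 negb_or nz_a0 andbT; apply: contraNneq nz_a0 => px0.
by move/esym/eqP: sq_a0; rewrite px0 scale0r -scaler_nat scaler_eq0 (negPf k0).
Qed.

Lemma specializableD A B : specializable A -> specializable B -> specializable (A + B).
Proof. by move=> [a Aa] [b Bb]; exists (a + b); apply: specializesD. Qed.

Lemma specializableM A B : specializable A -> specializable B -> specializable (A *m B).
Proof. by move=> [a Aa] [b Bb]; exists (a *m b); apply: specializesM. Qed.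

Lemma specializes_ytl A B a b :
  specializes A a -> specializes B b -> specializes (ytl A B) (ytl a b).
Proof.
move=> Aa Bb; rewrite /ytl -!mulmxE.
by do ?[apply: specializesD | apply: specializesM | exact: specializes1].
Qed.

End Specialization.

(* Z / k is a projection commuting with s1 and s2: a row v of Z is a common
   fixed vector, and the hyperplane annihilated by a column w of Z with
   v w <> 0 is an invariant complement. *)
Lemma trivial_summand_of_quasi_idempotent (F : fieldType) (N k : nat)
    (s1 s2 Z : 'M[F]_N) :
    (k%:R : F) != 0 -> Z != 0 -> s1 *m Z = Z -> s2 *m Z = Z ->
    Z *m s1 = Z -> Z *m s2 = Z -> Z *m Z = Z *+ k ->
  trivial_summand s1 s2.
Proof.
move=> k0 /matrix0Pn[i [j nzZij]] s1Z s2Z Zs1 Zs2 ZZ.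
set v := row i Z; set w := col j Z.
have vw : v *m w != 0.
  apply/matrix0Pn; exists 0, 0.
  rewrite /v /w colE mulmxA -row_mul ZZ -colE !mxE mulmxnE.
  by rewrite -mulr_natr mulf_neq0.
have nz_v : v != 0 by apply: contraNneq vw => ->; rewrite mul0mx.
have rank_w : \rank w = 1%N.
  apply/eqP; rewrite eqn_leq rank_leq_col lt0n mxrank_eq0.
  by apply: contraNneq vw => ->; rewrite mulmx0.
have stableW s : s *m Z = Z -> stablemx (kermx w) s.
  by move=> sZ; rewrite sub_kermx -mulmxA /w colE [s *m _]mulmxA sZ -colE mulmx_ker.
have cap0 : (v :&: kermx w)%MS == 0 by apply/mxrank_injP; rewrite !rank_rV vw nz_v.
exists v, (kermx w); split; first by rewrite nz_v /v -!row_mul Zs1 Zs2.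
split; rewrite ?stableW //; apply/eqP; move: (mxrank_sum_cap v (kermx w)).
rewrite (eqP cap0) mxrank0 addn0 rank_rV nz_v mxrank_ker rank_w add1n subn1.
by rewrite prednK // (leq_ltn_trans _ (ltn_ord i)).
Qed.

Lemma pow_conj (R : pzRingType) (g a a' : R) k :
  a' * g = g * a -> g * a ^+ k = a' ^+ k * g.
Proof.
move=> aga; elim: k => [|k IHk]; first by rewrite !expr0 mulr1 mul1r.
by rewrite !exprSr mulrA IHk -mulrA -aga mulrA.
Qed.

Definition e_ij (K : fieldType) N d (A B : 'M[K]_N) : 'M[K]_N :=
  (d%:R)^-1 *: \sum_(s < d) (A ^+ s *m invmx B ^+ s).

Lemma e_ij_conj (K : fieldType) N d (g A B A' B' : 'M[K]_N) :
    B \in unitmx -> B' \in unitmx ->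
    A' *m g = g *m A -> B' *m g = g *m B ->
  g *m e_ij d A B = e_ij d A' B' *m g.
Proof.
move=> uB uB' Ag Bg.
have Binv : invmx B' * g = g * invmx B.
  by rewrite -!mulmxE -[LHS](mulmxK uB) -[invmx B' *m g *m B]mulmxA -Bg mulKmx.
rewrite /e_ij -scalemxAr -scalemxAl !mulmxE mulr_sumr mulr_suml; congr (_ *: _).
apply: eq_bigr => s _.
by rewrite mulrA (pow_conj s Ag) -[_ * g * _]mulrA (pow_conj s Binv) mulrA.
Qed.

Lemma root_of_unity_unitmx (R : comUnitRingType) N d (A : 'M[R]_N) :
  (0 < d)%N -> A ^+ d = 1%:M -> A \in unitmx /\ invmx A = A ^+ d.-1.
Proof.
move=> d_gt0 Ad; have AA : A ^+ d.-1 *m A = 1%:M by rewrite mulmxE -exprSr prednK.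
by have [_ uA] := mulmx1_unit AA; rewrite -[invmx A]mul1mx -AA mulmxK.
Qed.

Section YokonumaHeckeSpecialization.
Variables (F : fieldType) (d n N : nat).
Variables (G T : nat -> 'M[{fraction {poly F}}]_N) (t : nat -> 'M[F]_N).
Local Notation frac := (@tofrac {poly F}).
Hypothesis d0 : (d%:R : F) != 0.
Hypothesis YH : YH_rep d n.+3 (frac 'X) G T.
Hypothesis T_spec : forall j, specializes 1 (T j) (t j).

Let c : 'M_N := (frac ('X - 1%:P))%:M.

Let c_spec : specializes 1 c 0.
Proof.
rewrite /c -scalemx1 -(scale0r 1%:M) -[0](subrr 1) -{1}(hornerXsubC 1 1).
exact: specializesZ (specializes1 _ _).
Qed.

Let T_unit j : (1 <= j <= n.+3)%N -> T j \in unitmx /\ invmx (T j) = T j ^+ d.-1.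
Proof.
have [_ [_ [_ [_ [Td _]]]]] := YH.
by move=> /Td; apply: root_of_unity_unitmx; rewrite lt0n; apply: contraNneq d0 => ->.
Qed.

(* Since T k ^+ d = 1, invmx (T k) is a power of T k, hence regular at u = 1. *)
Let e_spec j k : (1 <= k <= n.+3)%N -> specializable 1 (e_ij d (T j) (T k)).
Proof.
move=> /T_unit[_ invT]; rewrite /e_ij invT -(rmorph_nat frac).
have dE : (d%:R : {poly F}).[1] = d%:R by rewrite -polyC_natr hornerC.
eexists; apply: specializesZV; first by rewrite dE.
apply: specializes_sum => s; apply: specializesM.
  by apply/specializesX/T_spec.
by apply/specializesX/specializesX/T_spec.
Qed.

Let quad i : (1 <= i <= n.+2)%N -> G i *m G i =
  1%:M + c *m e_ij d (T i) (T i.+1) + c *m (e_ij d (T i) (T i.+1) *m G i).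
Proof.
have [_ [_ [_ [_ [_ quadYH]]]]] := YH.
by move=> /quadYH; rewrite !mul_scalar_mx rmorphB /= polyC1 rmorph1.
Qed.

Let e13 := e_ij d (T 1) (T 3).

Let conj_e : [/\ G 2 *m e_ij d (T 1) (T 2) = e13 *m G 2,
  G 1 *m e_ij d (T 2) (T 3) = e13 *m G 1 & G 1 *m e13 = e_ij d (T 2) (T 3) *m G 1].
Proof.
have [_ [_ [_ [Tg _]]]] := YH.
have [uT2 _] := T_unit (isT : (1 <= 2 <= n.+3)%N).
have [uT3 _] := T_unit (isT : (1 <= 3 <= n.+3)%N).
split.
- exact: (e_ij_conj d uT2 uT3 (Tg 2 1 isT isT) (Tg 2 3 isT isT)).
- exact: (e_ij_conj d uT3 uT3 (Tg 1 1 isT isT) (Tg 1 3 isT isT)).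
- exact: (e_ij_conj d uT3 uT3 (Tg 1 2 isT isT) (Tg 1 3 isT isT)).
Qed.

Lemma YH_ytl_sqr : exists2 K, specializable 1 K &
  ytl (G 1) (G 2) * ytl (G 1) (G 2) =
  ytl (G 1) (G 2) *+ 6 + (frac ('X - 1%:P))%:M * K * ytl (G 1) (G 2).
Proof.
have [_ [braid _]] := YH.
have [c21 c12 c113] := conj_e.
have cC A : A * c = c * A by rewrite -!mulmxE scalar_mxC.
exact: (ytl_sqr_congr (@specializableD _ 1 N) (@specializableM _ 1 N)
  (ex_intro _ 0 c_spec) (@e_spec 1 2 isT) (@e_spec 2 3 isT) (@e_spec 1 3 isT)
  (cC _) (cC _) (@quad 1 isT) (@quad 2 isT) (braid 1 isT isT) c21 c12 c113).
Qed.

Lemma YH_spec_involutions (s : nat -> 'M[F]_N) :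
    (forall i, specializes 1 (G i) (s i)) ->
  [/\ s 1 *m s 1 = 1%:M, s 2 *m s 2 = 1%:M & s 1 *m s 2 *m s 1 = s 2 *m s 1 *m s 2].
Proof.
move=> Gs; have [_ [braid _]] := YH.
have sq i : (1 <= i <= n.+2)%N -> s i *m s i = 1%:M.
  move=> i_lt; have [e eS] := @e_spec i i.+1 (andP i_lt).2.
  have := specializesD (specializesD (specializes1 _ _) (specializesM c_spec eS))
    (specializesM c_spec (specializesM eS (Gs i))).
  rewrite -quad // !mul0mx !addr0; apply: specializes_uniq.
  exact: specializesM.
split; rewrite ?sq //.
apply: specializes_uniq (specializesM (specializesM (Gs 1) (Gs 2)) (Gs 1)) _.
by rewrite braid //; apply: specializesM (specializesM (Gs 2) (Gs 1)) (Gs 2).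
Qed.

End YokonumaHeckeSpecialization.

Lemma YTL_eltE (K : fieldType) N (G : nat -> 'M[K]_N) :
  YTL_elt G = ytl (G 1%N) (G 2%N).
Proof. by rewrite /YTL_elt /ytl !mulmxE idmxE. Qed.

Lemma ytl_fixed_row (K : fieldType) N (v : 'rV[K]_N) (g h : 'M_N) :
  v *m g = v -> v *m h = v -> v *m ytl g h = v *+ 6.
Proof.
move=> vg vh; rewrite /ytl -!mulmxE -idmxE !mulmxDr !mulmxA !(vg, vh) mulmx1.
by rewrite !mulrS mulr0n addr0 !addrA.
Qed.

Theorem mainTheorem7 (d n N : nat) (Gp Tp : nat -> 'M[{poly algC}]_N)
    (D : {poly algC}) :
  (1 <= d)%N -> (3 <= n)%N -> D.[1] != 0 ->
  YH_rep d n uK (lift_rep D Gp) (lift_rep D Tp) ->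
  YH_irreducible n (lift_rep D Gp) (lift_rep D Tp) ->
  (YTL_elt (lift_rep D Gp) = 0 <->
   ~ trivial_summand (spec_rep D Gp 1%N) (spec_rep D Gp 2%N)).
Proof.
move=> d_gt0 n_ge3 D1 YH _.
have nat_neq0 k : (0 < k)%N -> (k%:R : algC) != 0 by rewrite pnatr_eq0 -lt0n.
case: n n_ge3 YH => [|[|[|n]]] // _ YH.
set s := spec_rep D Gp.
have Gs i : specializes 1 (lift_rep D Gp i) (s i) by exists D, (Gp i).
have Ts j : specializes 1 (lift_rep D Tp j) (spec_rep D Tp j) by exists D, (Tp j).
have [K KS sqZ] := YH_ytl_sqr (nat_neq0 _ d_gt0) YH Ts.
have [s11 s22 br] := YH_spec_involutions (nat_neq0 _ d_gt0) YH Ts Gs.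
have [s1Z s2Z Zs1 Zs2 ZZ] := ytl_involution s11 s22 br.
have Zz := specializes_ytl (Gs 1%N) (Gs 2%N).
rewrite !YTL_eltE; split.
  move=> Z0 [v [W [[nz_v vs1 vs2] _]]].
  have z0 : ytl (s 1%N) (s 2%N) = 0.
    by apply: specializes_uniq Zz _; rewrite Z0; apply: specializes0.
  move: (ytl_fixed_row vs1 vs2); rewrite z0 mulmx0 => /esym/eqP.
  by rewrite -scaler_nat scaler_eq0 (negPf (nat_neq0 6 isT)) (negPf nz_v).
have [//|nzZ] := eqVneq (ytl (lift_rep D Gp 1%N) (lift_rep D Gp 2%N)) 0.
move=> no_summand; exfalso; apply: no_summand.
apply: (trivial_summand_of_quasi_idempotent (nat_neq0 6 isT)) s1Z s2Z Zs1 Zs2 ZZ.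
exact: specializes_neq0 (nat_neq0 6 isT) KS sqZ Zz nzZ.
Qed.
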